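(* Let $\phi$ be an instance of \textsc{Max (2,3)-SAT} with $n$ variables and let $T_\phi$ be the tournament instance constructed from $\phi$ as described in the context. Let $\mathsf{opt}_A(\phi)$ be the maximum number of clauses of $\phi$ satisfied by an assignment and $\mathsf{opt}_B(T_\phi)$ the maximum tournament value of $T_\phi$ over all seedings. Then $\mathsf{opt}_B(T_\phi)=\mathsf{opt}_A(\phi)+n$.
   Context: Tournament model: players form a finite set of size $2^{n'}$ totally ordered by strength (stronger beats weaker). A seeding is a bijection $\sigma$ from players to $[2^{n'}]$. In round $r=1,\dots,n'$, for each block of seed positions $\{(k-1)2^r+1,\dots,k2^r\}$, the winner $a$ of its first half $\{(k-1)2^r+1,\dots,(k-1)2^r+2^{r-1}\}$ plays the winner $b$ of its second half (a single-position block is won by the player seeded there), the stronger one wins the block, and the game has value $v(a,b,r)$. The tournament value is the sum of values of all games played. \textsc{Max (2,3)-SAT} instance: a CNF formula $\phi$ with variables $x_1,\dots,x_n$ and clauses $c_1,\dots,c_m$, each clause having exactly two literals and each variable appearing in at most three clauses; the occurrences of each variable $x$ as a literal are numbered $1,2,3$ (its $j$th appearance) in a fixed order. Construction of $T_\phi$: let $n'$ be the smallest integer with $16n\le 2^{n'}$ and $p=2^{n'}-16n$. Players: for each variable $x$, three variable players $x,x^T,x^F$; for each clause $c$, one clause player $c$; and dummy players $f_1,\dots,f_{13n+p-m}$. Strength order (strongest first): $x_1>x_1^T>x_1^F>x_2>x_2^T>x_2^F>\dots>x_n>x_n^T>x_n^F>c_1>\dots>c_m>f_1>\dots>f_{13n+p-m}$.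 Game values: for each variable $x$, $v(x,x^T,1)=v(x^T,x,1)=v(x,x^F,1)=v(x^F,x,1)=1$; for each clause $c$ and each literal of $c$ that is the $j$th appearance of variable $x$, if $x$ appears non-negated there set $v(c,x^T,j)=v(x^T,c,j)=1$, and otherwise set $v(c,x^F,j)=v(x^F,c,j)=1$; all other values $v(a,b,r)$ for $r\in[n']$ are $0$. *)

From mathcomp Require Import all_boot.
Set Implicit Arguments.
Unset Strict Implicit.
Unset Printing Implicit Defensive.

(* Players of type P, strength given by an injective rank function     *)
(* (smaller rank = stronger player). A seeding is described by the     *)
(* list of players in seed-position order 1, 2, ..., 2^nr (i.e. the    *)
(* inverse sigma^-1 of the bijection sigma : players -> [2^nr]).       *)
(* Round r pairs consecutive winners of the blocks of size 2^(r-1):    *)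
(* the winner a of the first half of a block of size 2^r plays the     *)
(* winner b of its second half, the game has value v a b r.            *)
Section Tournament.
Variable P : Type.
Variable rank : P -> nat.
Variable v : P -> P -> nat -> nat.

Definition stronger (a b : P) : P := if rank a <= rank b then a else b.

Fixpoint pairs (l : seq P) : seq (P * P) :=
  match l with
  | a :: b :: t => (a, b) :: pairs t
  | _ => [::]
  end.

Definition round_winners (l : seq P) : seq P :=
  [seq stronger pq.1 pq.2 | pq <- pairs l].

Definition round_value (r : nat) (l : seq P) : nat :=
  \sum_(pq <- pairs l) v pq.1 pq.2 r.

(* value of the rounds r, r+1, ..., r+k-1 starting from the list l of
   winners of round r-1 *)
Fixpoint tourn_value_from (k r : nat) (l : seq P) : nat :=
  match k with
  | 0 => 0
  | k'.+1 => round_value r l + tourn_value_from k' r.+1 (round_winners l)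
  end.

Definition tourn_value (nr : nat) (l : seq P) : nat := tourn_value_from nr 1 l.
End Tournament.

Definition opt_tourn (P : finType) (rank : P -> nat) (v : P -> P -> nat -> nat)
  (nr : nat) : nat :=
  \max_(s : {ffun 'I_(2 ^ nr) -> P} | injectiveb s)
     tourn_value rank v nr [seq s i | i <- enum 'I_(2 ^ nr)].

(* Variables are 'I_n, clauses 'I_m; clause c has exactly two literals *)
(* phi c 0, phi c 1, a literal being (variable, true) for x and        *)
(* (variable, false) for its negation. occ c k is the number j of the  *)
(* occurrence (c,k) among the occurrences of its variable.             *)
Section SAT.
Variables (n m : nat) (phi : 'I_m -> 'I_2 -> 'I_n * bool)
          (occ : 'I_m -> 'I_2 -> nat).

Definition occurrences (x : 'I_n) : {set 'I_m * 'I_2} :=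
  [set o | (phi o.1 o.2).1 == x].

Definition max23sat_instance : Prop :=
  forall x : 'I_n,
    [/\ #|occurrences x| <= 3,
        {in occurrences x &, injective (fun o => occ o.1 o.2)} &
        {in occurrences x, forall o, 1 <= occ o.1 o.2 <= #|occurrences x|}].

Definition clause_sat (a : {ffun 'I_n -> bool}) (c : 'I_m) : bool :=
  [exists k : 'I_2, a (phi c k).1 == (phi c k).2].

Definition opt_A : nat :=
  \max_(a : {ffun 'I_n -> bool}) #|[set c | clause_sat a c]|.
End SAT.

Lemma nprime_ex (n : nat) : exists k, 16 * n <= 2 ^ k.
Proof. exists (16 * n); apply: ltnW; exact: ltn_expl. Qed.

Definition nprime (n : nat) : nat := ex_minn (nprime_ex n).

Definition padding (n : nat) : nat := 2 ^ nprime n - 16 * n.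

Definition ndummies (n m : nat) : nat := 13 * n + padding n - m.

(* players: inl (x, 0) = x, inl (x, 1) = x^T, inl (x, 2) = x^F,
   inr (inl c) = clause player c, inr (inr i) = dummy f_(i+1) *)
Definition Tplayer (n m : nat) : finType :=
  (('I_n * 'I_3) + ('I_m + 'I_(ndummies n m)))%type.

Definition Trank (n m : nat) (p : Tplayer n m) : nat :=
  match p with
  | inl (x, t) => 3 * x + t
  | inr (inl c) => 3 * n + c
  | inr (inr f) => 3 * n + m + f
  end.

Section Values.
Variables (n m : nat) (phi : 'I_m -> 'I_2 -> 'I_n * bool)
          (occ : 'I_m -> 'I_2 -> nat).

Definition Tvdir (a b : Tplayer n m) (r : nat) : bool :=
  match a, b with
  | inl (x, t), inl (y, u) =>
      [&& x == y, nat_of_ord t == 0, nat_of_ord u != 0 & r == 1]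
  | inl (x, t), inr (inl c) =>
      (nat_of_ord t != 0) &&
      [exists k : 'I_2, (phi c k == (x, nat_of_ord t == 1)) && (occ c k == r)]
  | _, _ => false
  end.

Definition Tvalue (a b : Tplayer n m) (r : nat) : nat :=
  Tvdir a b r || Tvdir b a r.

Definition opt_B : nat := opt_tourn (@Trank n m) Tvalue (nprime n).
End Values.

(* A valued game is won by the stronger player and nobody loses twice, so the
   value of a seeding is at most the number of players beaten in valued games.
   Those games are x against x^T or x^F in round 1, and a literal player
   against a clause containing its literal, in the round given by the
   occurrence number.  As the occurrences of x are numbered injectively by
   1..3, the two literal players of x win at most one valued game per round,
   three in all, and one beaten by x wins none; so x and its literal players
   beat at most 1 + w players, w being the number of wins of the more
   successful literal player.  Setting x to that literal satisfies all clauses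
   it beats, hence the value is at most n + opt_A.  Conversely, given an
   optimal assignment, let each satisfied clause pick a true literal, seed for
   each x a block of 8 starting with its true literal, with the clause picking
   the j-th occurrence of x at position 2^(j-1) and dummies elsewhere, and pair
   x with its false literal: the true literal beats its clauses in rounds 1 to
   3 and x beats its false literal, for a value of n + opt_A. *)

From mathcomp Require Import all_boot zify.
Set Implicit Arguments.
Unset Strict Implicit.
Unset Printing Implicit Defensive.

Lemma sum_nat_le_existsb (I : finType) (b : pred I) :
  {in b &, forall i j, i = j} -> \sum_i (b i : nat) <= [exists i, b i].
Proof.
move=> b_le1; case: existsP => [[i bi]|no_b]; last first.
  by rewrite big1 // => i _; case bi: (b i) => //; case: no_b; exists i.
rewrite (bigD1 i) //= bi big1 // => j /negbTE ji.
by case bj: (b j) => //; rewrite (b_le1 j i bj bi) ?eqxx in ji.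
Qed.

Lemma leq_sum_term (I : finType) (F : I -> nat) (i : I) k :
  k <= F i -> k <= \sum_j F j.
Proof. by move/leq_trans; apply; rewrite (bigD1 i) // leq_addr. Qed.
Arguments leq_sum_term {I F} i {k}.

Section Rounds.
Variables (P : Type) (rank : P -> nat) (v : P -> P -> nat -> nat).

Lemma pairs_ind (Q : seq P -> Prop) :
  Q [::] -> (forall a, Q [:: a]) -> (forall a b t, Q t -> Q [:: a, b & t]) ->
  forall l, Q l.
Proof.
move=> Q0 Q1 Q2 l; have [k] := ubnP (size l).
elim: k l => // k IHk [|a [|b t]] //= size_lt; apply/Q2/IHk; lia.
Qed.

Lemma size_pairs (l : seq P) : size (pairs l) = (size l)./2.
Proof. by elim/pairs_ind: l => [|a|a b t /= ->]. Qed.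

Lemma pairs_cat (l1 l2 : seq P) :
  ~~ odd (size l1) -> pairs (l1 ++ l2) = pairs l1 ++ pairs l2.
Proof. by elim/pairs_ind: l1 => [|a|a b t IH] //=; rewrite negbK => /IH ->. Qed.

Lemma size_round_winners (l : seq P) :
  size (round_winners rank l) = (size l)./2.
Proof. by rewrite size_map size_pairs. Qed.

Lemma round_winners_cat (l1 l2 : seq P) : ~~ odd (size l1) ->
  round_winners rank (l1 ++ l2) =
  round_winners rank l1 ++ round_winners rank l2.
Proof. by move=> even_l1; rewrite /round_winners pairs_cat // map_cat. Qed.

Lemma round_value_cat r (l1 l2 : seq P) : ~~ odd (size l1) ->
  round_value v r (l1 ++ l2) = round_value v r l1 + round_value v r l2.
Proof. by move=> even_l1; rewrite /round_value pairs_cat // big_cat. Qed.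

Lemma tourn_value_from_cat k r (l1 l2 : seq P) : 2 ^ k %| size l1 ->
  tourn_value_from rank v k r (l1 ++ l2) =
  tourn_value_from rank v k r l1 + tourn_value_from rank v k r l2.
Proof.
elim: k r l1 l2 => //= k IHk r l1 l2 /dvdnP[q size_l1].
have even_l1 : ~~ odd (size l1) by rewrite size_l1 expnS mulnCA oddM.
rewrite round_value_cat // round_winners_cat // IHk; first by rewrite addnACA.
by rewrite size_round_winners size_l1 expnS mulnCA mul2n doubleK dvdn_mull.
Qed.

Lemma tourn_value_from_flatten k r (bs : seq (seq P)) :
  all (fun b => size b == 2 ^ k) bs ->
  tourn_value_from rank v k r (flatten bs) =
  \sum_(b <- bs) tourn_value_from rank v k r b.
Proof.
elim: bs => [_|b bs IHbs /andP[/eqP size_b /IHbs IH]].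
  rewrite big_nil; elim: k r => //= k IHk r.
  by rewrite IHk /round_value big_nil.
by rewrite big_cons -IH tourn_value_from_cat // size_b.
Qed.

Definition winners (l : seq P) k := iter k (round_winners rank) l.

Lemma tourn_value_fromD k1 k2 r (l : seq P) :
  tourn_value_from rank v (k1 + k2) r l =
  tourn_value_from rank v k1 r l +
  tourn_value_from rank v k2 (r + k1) (winners l k1).
Proof.
elim: k1 r l => [|k1 IHk1] r l /=; first by rewrite addn0.
by rewrite IHk1 addnA /winners -iterSr addSnnS.
Qed.

Lemma tourn_value_fromE k r (l : seq P) :
  tourn_value_from rank v k r l =
  \sum_(i < k) round_value v (r + i) (winners l i).
Proof.
elim: k r l => [|k IHk] r l /=; first by rewrite big_ord0.
rewrite big_ord_recl addn0 IHk; congr (_ + _); apply: eq_bigr => i _.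
by rewrite /winners -iterSr addSnnS.
Qed.

Lemma tourn_value_mkseq8 (f : nat -> P) :
  rank (f 0) <= rank (f 1) -> rank (f 0) <= rank (f 2) ->
  rank (f 0) <= rank (f 3) ->
  v (f 0) (f 1) 1 + v (f 0) (stronger rank (f 2) (f 3)) 2 +
    v (f 0) (stronger rank (stronger rank (f 4) (f 5))
                           (stronger rank (f 6) (f 7))) 3 <=
  tourn_value_from rank v 3 1 (mkseq f 8).
Proof.
move=> le01 le02 le03.
have win1 : stronger rank (f 0) (f 1) = f 0 by rewrite /stronger le01.
have win2 : stronger rank (f 0) (stronger rank (f 2) (f 3)) = f 0.
  by rewrite {2}/stronger; case: ifP; rewrite /stronger ?le02 ?le03.
rewrite /= /round_value /round_winners /= !big_cons !big_nil /= win1 win2; lia.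
Qed.

End Rounds.

Section Pairing.
Variables (P : eqType) (rank : P -> nat).

Definition paired (l : seq P) (a b : P) :=
  ((a, b) \in pairs l) || ((b, a) \in pairs l).

Lemma pairedC l a b : paired l a b = paired l b a.
Proof. by rewrite /paired orbC. Qed.

Lemma paired_cons2 a0 b0 t a b : paired [:: a0, b0 & t] a b =
  [|| (a == a0) && (b == b0), (a == b0) && (b == a0) | paired t a b].
Proof.
by rewrite /paired /= !inE !xpair_eqE orbACA -!orbA [(b == a0) && _]andbC.
Qed.

Lemma paired_mem l a b : paired l a b -> a \in l.
Proof.
elim/pairs_ind: l => [|a0|a0 b0 t IH] //; rewrite paired_cons2 !inE.
by case/or3P => [/andP[-> _]|/andP[-> _]|/IH ->]; rewrite ?orbT.
Qed.

Lemma paired_uniq l a b c : uniq l -> paired l a b -> paired l a c -> b = c.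
Proof.
elim/pairs_ind: l => [|a0|a0 b0 t IH] //= /and3P[].
rewrite inE negb_or => /andP[a0b0 a0t] b0t uniq_t; rewrite !paired_cons2.
have [a_t|a_t] := boolP (a \in t).
  have /negbTE-> : a != a0 by apply/eqP=> eq_a; rewrite -eq_a a_t in a0t.
  have /negbTE-> : a != b0 by apply/eqP=> eq_a; rewrite -eq_a a_t in b0t.
  exact: IH.
have t_a y : paired t a y = false by apply: contraNF a_t; apply: paired_mem.
rewrite !t_a !orbF; have [->|_] := eqVneq a a0.
  by rewrite (negbTE a0b0) /= !orbF => /eqP-> /eqP->.
by move=> /andP[_ /eqP->] /andP[_ /eqP->].
Qed.

Lemma pairs_neq (l : seq P) (a b : P) : uniq l -> (a, b) \in pairs l -> a != b.
Proof.
elim/pairs_ind: l => [|a0|a0 b0 t IH] //= /and3P[].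
rewrite inE negb_or => /andP[a0b0 _] _ /IH{}IH.
by rewrite inE => /orP[/eqP[-> ->]|/IH].
Qed.

Lemma mem_pairs (l : seq P) (a b : P) :
  (a, b) \in pairs l -> (a \in l) && (b \in l).
Proof.
move=> ab; rewrite (@paired_mem l a b) ?(@paired_mem l b a) //.
  by rewrite /paired ab orbT.
by rewrite /paired ab.
Qed.

Lemma mem_round_winners l x : x \in round_winners rank l -> x \in l.
Proof.
case/mapP=> -[a b] /mem_pairs/andP[a_l b_l] ->.
by rewrite /stronger; case: ifP.
Qed.

Lemma round_winners_uniq l : uniq l -> uniq (round_winners rank l).
Proof.
elim/pairs_ind: l => [|a|a b t IH] //= /and3P[].
rewrite inE negb_or => /andP[_ a_t] b_t /IH ->; rewrite andbT.
apply/negP=> /mem_round_winners; rewrite /stronger.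
by case: ifP => _ w_t; [rewrite w_t in a_t | rewrite w_t in b_t].
Qed.

Definition weaker (a b : P) : P := if rank a <= rank b then b else a.

Lemma weakers_uniq l : uniq l -> uniq [seq weaker p.1 p.2 | p <- pairs l].
Proof.
elim/pairs_ind: l => [|a|a b t IH] //= /and3P[].
rewrite inE negb_or => /andP[_ a_t] b_t /IH ->; rewrite andbT.
apply/mapP=> -[[p q] /mem_pairs/andP[p_t q_t]]; rewrite /weaker.
by case: ifP => _; case: ifP => _ eq_w; rewrite eq_w ?p_t ?q_t in a_t b_t.
Qed.

Lemma loser_notin_round_winners l a b : uniq l -> paired l a b ->
  rank b < rank a -> a \notin round_winners rank l.
Proof.
move=> uniq_l ab lt_ba; apply/negP=> /mapP[[p q] pq_l /=].
have pq : paired l p q by rewrite /paired pq_l.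
rewrite /stronger; case: leqP => [le_pq|lt_qp] eq_a; subst a.
  by rewrite (paired_uniq uniq_l ab pq) ltnNge le_pq in lt_ba.
rewrite pairedC in pq; rewrite (paired_uniq uniq_l ab pq) in lt_ba.
by rewrite ltnNge (ltnW lt_qp) in lt_ba.
Qed.

Lemma winners_uniq l k : uniq l -> uniq (winners rank l k).
Proof. by move=> uniq_l; elim: k => //= k; apply: round_winners_uniq. Qed.

Lemma mem_winners_le l k1 k2 x :
  k1 <= k2 -> x \in winners rank l k2 -> x \in winners rank l k1.
Proof.
move/subnK<-; elim: (k2 - k1) => //= k IHk /mem_round_winners; exact: IHk.
Qed.

Lemma paired_winners_le l k1 k2 a b c : uniq l ->
  paired (winners rank l k1) a b -> rank b < rank a ->
  paired (winners rank l k2) a c -> k2 <= k1.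
Proof.
move=> uniq_l ab lt_ba ac; rewrite leqNgt; apply/negP=> lt_k12.
have := loser_notin_round_winners (winners_uniq k1 uniq_l) ab lt_ba.
by rewrite (mem_winners_le lt_k12 (paired_mem ac)).
Qed.
End Pairing.

Section Beaten.
Variables (P : finType) (rank : P -> nat) (v : P -> P -> nat -> nat).
Hypothesis rank_inj : injective rank.
Hypothesis v_le1 : forall a b r, v a b r <= 1.
Hypothesis vC : forall a b r, v a b r = v b a r.

Definition beats_in (l : seq P) r (V W : P) :=
  [&& paired l W V, rank V < rank W & 0 < v W V r].

Definition beats nr (l : seq P) (V W : P) :=
  [exists k : 'I_nr, beats_in (winners rank l k) k.+1 V W].

Definition beaten nr (l : seq P) (W : P) := [exists V, beats nr l V W].

Lemma round_value_le_beaten r (l : seq P) : uniq l ->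
  round_value v r l <= \sum_W ([exists V, beats_in l r V W] : nat).
Proof.
move=> uniq_l; rewrite /round_value.
apply: (@leq_trans (\sum_(W <- [seq weaker rank p.1 p.2 | p <- pairs l])
                     [exists V, beats_in l r V W])).
  rewrite big_map !big_seq; apply: leq_sum => -[a b] ab_l /=.
  have [-> //|v_pos] := posnP (v a b r).
  apply: leq_trans (v_le1 a b r) _; rewrite lt0b; apply/existsP.
  exists (stronger rank a b).
  have neq_ab : rank a != rank b.
    by rewrite (inj_eq rank_inj) (pairs_neq uniq_l ab_l).
  rewrite /beats_in /weaker /stronger.
  case: (leqP (rank a) (rank b)) => [le_ab|lt_ba].
    by rewrite pairedC /paired ab_l ltn_neqAle neq_ab le_ab vC v_pos.
  by rewrite /paired ab_l lt_ba v_pos.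
rewrite big_uniq ?weakers_uniq // big_mkcond /=.
by apply: leq_sum => W _; case: ifP.
Qed.

Lemma beats_in_winners_uniq (l : seq P) k1 k2 V1 V2 W : uniq l ->
  beats_in (winners rank l k1) k1.+1 V1 W ->
  beats_in (winners rank l k2) k2.+1 V2 W -> k1 = k2 /\ V1 = V2.
Proof.
move=> uniq_l /and3P[W1 lt1 _] /and3P[W2 lt2 _].
have eq_k : k1 = k2.
  by apply/eqP; rewrite eqn_leq (paired_winners_le uniq_l W1 lt1 W2)
                      (paired_winners_le uniq_l W2 lt2 W1).
by subst k2; split=> //; apply: paired_uniq (winners_uniq rank k1 uniq_l) W1 W2.
Qed.

Lemma beats_uniq nr (l : seq P) V1 V2 W : uniq l ->
  beats nr l V1 W -> beats nr l V2 W -> V1 = V2.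
Proof.
move=> uniq_l /existsP[k1 b1] /existsP[k2 b2].
by case: (beats_in_winners_uniq uniq_l b1 b2).
Qed.

Lemma tourn_value_le_beaten nr (l : seq P) : uniq l ->
  tourn_value rank v nr l <= \sum_W (beaten nr l W : nat).
Proof.
move=> uniq_l; rewrite /tourn_value tourn_value_fromE.
apply: (@leq_trans (\sum_(k < nr) \sum_W
          ([exists V, beats_in (winners rank l k) k.+1 V W] : nat))).
  apply: leq_sum => k _; rewrite add1n.
  exact/round_value_le_beaten/winners_uniq.
rewrite exchange_big; apply: leq_sum => W _ /=.
apply: leq_trans (sum_nat_le_existsb _) _.
  move=> k1 k2 /existsP[V1 b1] /existsP[V2 b2]; apply: val_inj.
  by case: (beats_in_winners_uniq uniq_l b1 b2).
case: existsP => //= -[k /existsP[V b]]; rewrite lt0b.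
by apply/existsP; exists V; apply/existsP; exists k.
Qed.
End Beaten.

Section Instance.
Variables (n m : nat) (phi : 'I_m -> 'I_2 -> 'I_n * bool)
          (occ : 'I_m -> 'I_2 -> nat).
Hypothesis inst : max23sat_instance phi occ.

Lemma occ_range c i : 1 <= occ c i <= 3.
Proof.
have [le3 _ occ_in] := inst (phi c i).1.
have /occ_in/andP[-> le_occ] : (c, i) \in occurrences phi (phi c i).1.
  by rewrite inE.
exact: leq_trans le_occ le3.
Qed.

Lemma occ_inj c1 i1 c2 i2 : (phi c1 i1).1 = (phi c2 i2).1 ->
  occ c1 i1 = occ c2 i2 -> c1 = c2 /\ i1 = i2.
Proof.
move=> same_x eq_occ; have [_ occ_inj _] := inst (phi c1 i1).1.
have := occ_inj (c1, i1) (c2, i2); rewrite !inE /= same_x eqxx.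
by move=> /(_ isT isT eq_occ) [].
Qed.

Lemma clauses_le : 2 * m <= 3 * n.
Proof.
have -> : 2 * m = \sum_(o : 'I_m * 'I_2) 1.
  by rewrite sum1_card card_prod !card_ord mulnC.
rewrite (partition_big (fun o => (phi o.1 o.2).1) xpredT) //=.
apply: (@leq_trans (\sum_(x < n) 3)).
  by apply: leq_sum => x _; rewrite sum1dep_card; case: (inst x).
by rewrite sum_nat_const card_ord mulnC.
Qed.

Lemma opt_A_le : opt_A phi <= m.
Proof.
by apply/bigmax_leqP => a _; apply: leq_trans (max_card _) _; rewrite card_ord.
Qed.
End Instance.

Lemma nprime_spec n : 16 * n <= 2 ^ nprime n.
Proof. by rewrite /nprime; case: ex_minnP. Qed.

Lemma nprime_ge3 n : 0 < n -> 3 <= nprime n.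
Proof.
move=> n_gt0; have := nprime_spec n.
by case: (nprime n) => [|[|[|k]]] //; rewrite ?expn0 ?expn1; lia.
Qed.

Lemma card_Tplayer n m : 2 * m <= 3 * n -> #|Tplayer n m| = 2 ^ nprime n.
Proof.
move=> m_le; have := nprime_spec n.
rewrite card_sum card_prod card_sum !card_ord /ndummies /padding; lia.
Qed.

Section Players.
Variables (n m : nat).
Local Notation P := (Tplayer n m).

Definition var_player (x : 'I_n) : P := inl (x, ord0).
Definition lit_player (x : 'I_n) (s : bool) : P :=
  inl (x, if s then Ordinal (isT : 1 < 3) else Ordinal (isT : 2 < 3)).
Definition clause_player (c : 'I_m) : P := inr (inl c).
Definition dummy_player (d : 'I_(ndummies n m)) : P := inr (inr d).

Lemma lit_player_inj x1 s1 x2 s2 :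
  lit_player x1 s1 = lit_player x2 s2 -> x1 = x2 /\ s1 = s2.
Proof. by case: s1; case: s2 => -[]. Qed.

Lemma lit_player_neq_var x s y : lit_player x s <> var_player y.
Proof. by case: s. Qed.

Lemma clause_player_inj : injective clause_player.
Proof. by move=> c1 c2 []. Qed.

Lemma inl_lit_player x (t : 'I_3) :
  nat_of_ord t != 0 -> inl (x, t) = lit_player x (t == 1 :> nat).
Proof.
by case: t => -[|[|[|]]] //= lt_t _; congr (inl (_, _)); apply: val_inj.
Qed.

Lemma Trank_inj : injective (@Trank n m).
Proof.
have rank_var (x : 'I_n) (t : 'I_3) : 3 * x + t < 3 * n.
  by have := ltn_ord x; have := ltn_ord t; lia.
case=> [[x t]|[c|d]] [[y u]|[c'|d']] /= eq_rank.
- have [eq_xy eq_tu] : x = y :> nat /\ t = u :> nat.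
    by have := ltn_ord t; have := ltn_ord u; lia.
  by rewrite (val_inj eq_xy) (val_inj eq_tu).
- by exfalso; have := rank_var x t; lia.
- by exfalso; have := rank_var x t; lia.
- by exfalso; have := rank_var y u; lia.
- by rewrite (val_inj (addnI eq_rank)).
- by exfalso; have := ltn_ord c; lia.
- by exfalso; have := rank_var y u; lia.
- by exfalso; have := ltn_ord c'; lia.
- by rewrite (val_inj (addnI eq_rank)).
Qed.
End Players.

Section Games.
Variables (n m : nat) (phi : 'I_m -> 'I_2 -> 'I_n * bool)
          (occ : 'I_m -> 'I_2 -> nat).
Local Notation rank := (@Trank n m).

Lemma TvdirP a b r : Tvdir phi occ a b r ->
  (exists x s, [/\ a = var_player m x, b = lit_player m x s & r = 1]) \/
  (exists x s c i, [/\ a = lit_player m x s, b = clause_player n c,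
                       phi c i = (x, s) & occ c i = r]).
Proof.
case: a => [[x t]|[c|d]]; case: b => [[y u]|[c'|d']] //=.
  case/and4P=> /eqP<- /eqP t0 u0 /eqP->; left; exists x, (u == 1 :> nat).
  by rewrite -inl_lit_player //; split=> //; congr (inl (_, _)); apply: val_inj.
case/andP=> t0 /existsP[i /andP[/eqP phi_ci /eqP occ_ci]]; right.
by exists x, (t == 1 :> nat), c', i; rewrite -inl_lit_player.
Qed.

Lemma Tvdir_rank a b r : Tvdir phi occ a b r -> rank a < rank b.
Proof.
case/TvdirP=> [[x [s [-> -> _]]]|[x [s [c [i [-> -> _ _]]]]]] /=.
  by case: s => /=; lia.
by have := ltn_ord x; case: s => /=; lia.
Qed.

Lemma Tvalue_pos W V r : 0 < Tvalue phi occ W V r -> rank V < rank W ->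
  Tvdir phi occ V W r.
Proof.
rewrite lt0b => /orP[/Tvdir_rank lt_WV lt_VW|//].
by rewrite ltnNge (ltnW lt_WV) in lt_VW.
Qed.

Lemma Tvalue_le1 a b r : Tvalue phi occ a b r <= 1.
Proof. exact: leq_b1. Qed.

Lemma TvalueC a b r : Tvalue phi occ a b r = Tvalue phi occ b a r.
Proof. by rewrite /Tvalue orbC. Qed.
End Games.

Section UpperBound.
Variables (n m : nat) (phi : 'I_m -> 'I_2 -> 'I_n * bool)
          (occ : 'I_m -> 'I_2 -> nat).
Hypothesis inst : max23sat_instance phi occ.
Variables (nr : nat) (l : seq (Tplayer n m)).
Hypothesis uniq_l : uniq l.

Local Notation rank := (@Trank n m).
Local Notation v := (Tvalue phi occ).
Local Notation round k := (winners rank l k).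
Local Notation beats_at k := (beats_in rank v (round k) k.+1).
Local Notation beats := (beats rank v nr l).
Local Notation beaten := (beaten rank v nr l).
Local Notation var := (var_player m).
Local Notation lit := (lit_player m).

Definition wins V := \sum_W (beats V W : nat).

Lemma beaten_lit x s : beaten (lit x s) -> beats_at 0 (var x) (lit x s).
Proof.
case/existsP=> V /existsP[k /[dup] bk /and3P[_ lt_VW /Tvalue_pos/(_ lt_VW)]].
case/TvdirP=> [[y [s' [eq_V eq_lit [k0]]]]|[y [s' [c [i [_ //]]]]]].
by case: (lit_player_inj eq_lit) => eq_x _; subst y; move: bk; rewrite eq_V k0.
Qed.

Lemma lit_beats_atP x s k W : beats_at k (lit x s) W ->
  exists c i, [/\ W = clause_player n c, phi c i = (x, s) & occ c i = k.+1].
Proof.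
case/and3P=> _ lt_VW /Tvalue_pos/(_ lt_VW).
case/TvdirP=> [[y [s' [eq_lit _ _]]]|[y [s' [c [i [eq_lit -> phi_ci occ_i]]]]]].
  by case: (lit_player_neq_var eq_lit).
by case: (lit_player_inj eq_lit) => -> ->; exists c, i.
Qed.

Lemma beaten_lit_wins0 x s : beaten (lit x s) -> wins (lit x s) = 0.
Proof.
move/beaten_lit=> /and3P[lit_x lt_x _]; rewrite /wins big1 // => W _.
case bW: (beats _ W) => //; case/existsP: bW => k /and3P[W_lit lt_W _].
rewrite pairedC in W_lit.
have k0 : val k = 0.
  by apply/eqP; rewrite -leqn0 (paired_winners_le uniq_l lit_x lt_x W_lit).
rewrite k0 in W_lit.
rewrite (paired_uniq (winners_uniq _ 0 uniq_l) W_lit lit_x) in lt_W.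
by rewrite ltnNge (ltnW lt_x) in lt_W.
Qed.

Lemma beaten_lits_excl x : ~~ (beaten (lit x true) && beaten (lit x false)).
Proof.
apply/andP=> -[/beaten_lit/and3P[T_x _ _] /beaten_lit/and3P[F_x _ _]].
rewrite pairedC in T_x; rewrite pairedC in F_x.
by have [] := lit_player_inj (paired_uniq (winners_uniq _ 0 uniq_l) T_x F_x).
Qed.

Lemma wins_lits_le3 x : wins (lit x true) + wins (lit x false) <= 3.
Proof.
pose R (j : 'I_3) W := [exists s, beats_at j (lit x s) W].
rewrite /wins -big_split /=.
apply: (@leq_trans (\sum_W \sum_j (R j W : nat))).
  apply: leq_sum => W _.
  have covered s : beats (lit x s) W -> 0 < \sum_j (R j W : nat).
    case/existsP=> k bk; have [c [i [_ _ occ_ci]]] := lit_beats_atP bk.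
    have k_lt3 : k < 3 by have := occ_range inst c i; rewrite occ_ci.
    rewrite (bigD1 (Ordinal k_lt3)) //=; apply: ltn_addr; rewrite lt0b.
    by apply/existsP; exists s.
  case bT: (beats (lit x true) W); case bF: (beats (lit x false) W) => //=.
  - by have [] := lit_player_inj (beats_uniq uniq_l bT bF).
  - exact: covered bT.
  - exact: covered bF.
rewrite exchange_big /=.
apply: (@leq_trans (\sum_(j < 3) 1)); last by rewrite sum_nat_const card_ord.
apply: leq_sum => j _; apply: leq_trans (sum_nat_le_existsb _) (leq_b1 _).
move=> W1 W2 /existsP[s1 b1] /existsP[s2 b2].
have [eq_s|neq_s] := eqVneq s1 s2.
  move: b1 b2; rewrite eq_s => /and3P[W1_lit _ _] /and3P[W2_lit _ _].
  rewrite pairedC in W1_lit; rewrite pairedC in W2_lit.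
  exact: paired_uniq (winners_uniq _ _ uniq_l) W1_lit W2_lit.
have [c1 [i1 [_ phi1 occ1]]] := lit_beats_atP b1.
have [c2 [i2 [_ phi2 occ2]]] := lit_beats_atP b2.
have same_x : (phi c1 i1).1 = (phi c2 i2).1 by rewrite phi1 phi2.
have [eq_c eq_i] := occ_inj inst same_x (etrans occ1 (esym occ2)).
by move: phi2; rewrite -eq_c -eq_i phi1 => -[eq_s]; rewrite eq_s eqxx in neq_s.
Qed.

Lemma beaten_le_lits :
  \sum_W (beaten W : nat) <=
  \sum_x \sum_s ((beaten (lit x s) : nat) + wins (lit x s)).
Proof.
apply: (@leq_trans (\sum_W \sum_x \sum_s
          (((W == lit x s) && beaten W : nat) + beats (lit x s) W)));
  last first.
  rewrite exchange_big; apply: leq_sum => x _; rewrite exchange_big.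
  apply: leq_sum => s _ /=; rewrite big_split /= (bigD1 (lit x s)) //= eqxx.
  by rewrite big1 ?addn0 // => W /negbTE->.
apply: leq_sum => W _; case beaten_W: (beaten W) => //.
have /existsP[V /existsP[k /[dup] bk /and3P[_ lt_VW /Tvalue_pos/(_ lt_VW)]]] :=
  beaten_W.
case/TvdirP=> [[x [s [_ eq_W _]]]|[x [s [c [i [eq_V _ _ _]]]]]].
  apply: (leq_sum_term x); apply: (leq_sum_term s).
  by rewrite eq_W eqxx.
apply: (leq_sum_term x); apply: (leq_sum_term s).
have -> : beats (lit x s) W by rewrite -eq_V; apply/existsP; exists k.
exact: leq_addl.
Qed.

Lemma lits_le x : \sum_s ((beaten (lit x s) : nat) + wins (lit x s)) <=
  1 + maxn (wins (lit x true)) (wins (lit x false)).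
Proof.
have excl := beaten_lits_excl x; have le3 := wins_lits_le3 x.
rewrite big_bool /=.
case bT: (beaten (lit x true)); case bF: (beaten (lit x false)) => //=.
- by rewrite bT bF in excl.
- by rewrite (beaten_lit_wins0 bT); lia.
- by rewrite (beaten_lit_wins0 bF); lia.
- lia.
Qed.

Definition best_assignment : {ffun 'I_n -> bool} :=
  [ffun x => wins (lit x false) <= wins (lit x true)].

Lemma wins_best_assignment x : wins (lit x (best_assignment x)) =
  maxn (wins (lit x true)) (wins (lit x false)).
Proof. by rewrite ffunE; case: leqP. Qed.

Lemma wins_le_sat (a : {ffun 'I_n -> bool}) :
  \sum_x wins (lit x (a x)) <= #|[set c | clause_sat phi a c]|.
Proof.
rewrite /wins exchange_big /= -(card_imset _ (@clause_player_inj n m)).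
rewrite -sum1_card [X in _ <= X]big_mkcond /=; apply: leq_sum => W _.
apply: leq_trans (sum_nat_le_existsb _) _.
  by move=> x y bx bY; case: (lit_player_inj (beats_uniq uniq_l bx bY)).
case bW: [exists x, beats (lit x (a x)) W] => //.
case/existsP: bW => x /existsP[k /lit_beats_atP[c [i [-> phi_ci _]]]].
rewrite mem_imset ?inE; last exact: clause_player_inj.
by have -> : clause_sat phi a c by apply/existsP; exists i; rewrite phi_ci.
Qed.

Lemma tourn_value_le_opt_A : tourn_value rank v nr l <= n + opt_A phi.
Proof.
apply: leq_trans (tourn_value_le_beaten (@Trank_inj n m)
  (@Tvalue_le1 n m phi occ) (@TvalueC n m phi occ) nr uniq_l) _.
apply: leq_trans beaten_le_lits _.
apply: (@leq_trans
  (\sum_x (1 + maxn (wins (lit x true)) (wins (lit x false))))).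
  by apply: leq_sum => x _; apply: lits_le.
rewrite big_split sum_nat_const card_ord muln1 leq_add2l.
under eq_bigr do rewrite -wins_best_assignment.
exact: leq_trans (wins_le_sat _) (leq_bigmax _).
Qed.
End UpperBound.

Lemma pairs_flatten2 (T I : Type) (f g : I -> T) (s : seq I) :
  pairs (flatten [seq [:: f i; g i] | i <- s]) = [seq (f i, g i) | i <- s].
Proof. by elim: s => //= i s ->. Qed.

Lemma flatten_iota s k N :
  flatten [seq iota (s + k * i) k | i <- iota 0 N] = iota s (k * N).
Proof.
elim: N => [|N IHN]; first by rewrite muln0.
rewrite -addn1 iotaD map_cat flatten_cat IHN /= cats0 add0n.
by rewrite mulnDr muln1 iotaD.
Qed.

Lemma seeding_of_uniq (T : finType) N (s : seq T) : size s = N -> uniq s ->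
  exists2 f : {ffun 'I_N -> T}, injectiveb f & [seq f i | i <- enum 'I_N] = s.
Proof.
move=> /eqP size_s uniq_s; pose t := Tuple size_s.
exists [ffun i => tnth t i]; last first.
  by rewrite (eq_map (g := tnth t)) ?map_tnth_enum // => i; rewrite ffunE.
apply/injectiveP=> i j; rewrite !ffunE; exact: (tuple_uniqP t).
Qed.

Section LowerBound.
Variables (n m : nat) (phi : 'I_m -> 'I_2 -> 'I_n * bool)
          (occ : 'I_m -> 'I_2 -> nat).
Hypothesis inst : max23sat_instance phi occ.
Variables (a : {ffun 'I_n -> bool}) (d0 : 'I_(ndummies n m)).
Hypothesis dummies_ge : 7 * n <= ndummies n m.

Local Notation P := (Tplayer n m).
Local Notation rank := (@Trank n m).
Local Notation v := (Tvalue phi occ).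
Local Notation var := (var_player m).
Local Notation lit := (lit_player m).
Local Notation clause := (clause_player n).

Definition witness (c : 'I_m) : 'I_2 :=
  if a (phi c ord0).1 == (phi c ord0).2 then ord0 else ord_max.

Lemma witness_sat c : clause_sat phi a c ->
  a (phi c (witness c)).1 = (phi c (witness c)).2.
Proof.
rewrite /witness; case: ifP => [/eqP //|unsat0 /existsP[k /eqP sat_k]].
have [eq_k|eq_k] : k = ord0 \/ k = ord_max.
  by case: k {sat_k} => -[|[|//]] ?; [left|right]; apply: val_inj.
  by rewrite -eq_k sat_k eqxx in unsat0.
by rewrite -eq_k.
Qed.

(* Clause c sits at position p of the block of i when its witness literal is
   the j-th occurrence of i, with p = 2^(j-1): there it is the opponent of the
   block's first player in round j. *)
Definition seated (i : 'I_n) (p : nat) (c : 'I_m) :=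
  (phi c (witness c) == (i, a i)) && (2 ^ (occ c (witness c)).-1 == p).

Definition filled (i : 'I_n) (j : nat) := [exists c, seated i (2 ^ j) c].

Definition dummy (k : nat) : P := dummy_player (insubd d0 k).

Definition block_player (i : 'I_n) (p : nat) : P :=
  if p == 0 then lit i (a i)
  else if [pick c | seated i p c] is Some c then clause c
  else dummy (7 * i + p.-1).

Definition block (i : 'I_n) := mkseq (block_player i) 8.

Definition var_pairs :=
  flatten [seq [:: var i; lit i (~~ a i)] | i <- enum 'I_n].

Definition seed_prefix := flatten [seq block i | i <- enum 'I_n] ++ var_pairs.

Definition seed_list := seed_prefix ++ [seq p <- enum P | p \notin seed_prefix].

(* The position of each player of seed_prefix in that list. *)
Definition seed_pos (p : P) : nat :=
  match p with
  | inl (x, t) => if nat_of_ord t == 0 then 8 * n + 2 * x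
                  else if (nat_of_ord t == 1) == a x then 8 * x
                  else 8 * n + 2 * x + 1
  | inr (inl c) => 8 * (phi c (witness c)).1 + 2 ^ (occ c (witness c)).-1
  | inr (inr d) => 8 * (d %/ 7) + (d %% 7).+1
  end.

Lemma seed_pos_block i p : p < 8 -> seed_pos (block_player i p) = 8 * i + p.
Proof.
rewrite /block_player; case: eqP => [-> _|/eqP p_neq0 lt_p8].
  by rewrite /seed_pos /lit_player addn0; case: (a i).
case: pickP => [c /andP[/eqP phi_c /eqP pos_c]|_] /=.
  by rewrite phi_c pos_c.
have val_dummy : insubd d0 (7 * i + p.-1) = 7 * i + p.-1 :> nat.
  by rewrite insubdK //; have := ltn_ord i; lia.
rewrite val_dummy; lia.
Qed.

Lemma map_seed_pos_block i : map seed_pos (block i) = iota (8 * i) 8.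
Proof.
rewrite /block /mkseq -map_comp -[8 * i]addn0 iotaDl.
apply/eq_in_map => p; rewrite mem_iota => /andP[_ lt_p8].
exact: seed_pos_block.
Qed.

Lemma map_seed_pos_blocks :
  map seed_pos (flatten [seq block i | i <- enum 'I_n]) = iota 0 (8 * n).
Proof.
rewrite -flatten_iota -val_enum_ord map_flatten -2!map_comp.
by congr flatten; apply: eq_map => i; apply: map_seed_pos_block.
Qed.

Lemma map_seed_pos_var_pairs : map seed_pos var_pairs = iota (8 * n) (2 * n).
Proof.
rewrite -flatten_iota -val_enum_ord map_flatten -2!map_comp.
by congr flatten; apply: eq_map => i /=; case: (a i); rewrite /= addn1.
Qed.

Lemma seed_list_uniq : uniq seed_list.
Proof.
have uniq_prefix : uniq seed_prefix.
  apply: (@map_uniq _ _ seed_pos).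
  rewrite map_cat map_seed_pos_blocks map_seed_pos_var_pairs -iotaD.
  exact: iota_uniq.
rewrite cat_uniq uniq_prefix filter_uniq ?enum_uniq //= andbT.
by apply/hasPn=> p; rewrite mem_filter => /andP[].
Qed.

Lemma size_seed_list : size seed_list = #|P|.
Proof.
rewrite cardT; apply/perm_size/uniq_perm.
- exact: seed_list_uniq.
- exact: enum_uniq.
by move=> p; rewrite mem_cat mem_filter mem_enum andbT orbN.
Qed.

Lemma lit_beats_seated i j c :
  seated i (2 ^ j) c -> v (lit i (a i)) (clause c) j.+1 = 1.
Proof.
case/andP=> /eqP phi_c; rewrite eqn_exp2l // => /eqP occ_c.
have {}occ_c : occ c (witness c) = j.+1.
  by have := occ_range inst c (witness c); lia.
rewrite /Tvalue; apply/eqP; rewrite eqb1; apply/orP; left.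
case: (a i) phi_c => phi_c /=; apply/existsP; exists (witness c).
  by rewrite phi_c occ_c !eqxx.
by rewrite phi_c occ_c !eqxx.
Qed.

Lemma stronger_clause_dummy c k : stronger rank (clause c) (dummy k) = clause c.
Proof. by rewrite /stronger /= ifT //; have := ltn_ord c; lia. Qed.

Lemma stronger_dummy k1 k2 :
  exists k, stronger rank (dummy k1) (dummy k2) = dummy k.
Proof. by rewrite /stronger; case: ifP; eexists. Qed.

Lemma block_value i : \sum_(j < 3) (filled i j : nat) <=
  tourn_value_from rank v 3 1 (block i).
Proof.
have lit_stronger p :
    0 < p -> rank (block_player i 0) <= rank (block_player i p).
  move=> /lt0n_neq0/negbTE p_neq0; rewrite /block_player p_neq0 /=.
  have lit_rank : 3 * i + (if a i then 1 else 2) < 3 * n.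
    by case: (a i); have := ltn_ord i; lia.
  by case: (a i) lit_rank; case: pickP => [c _|_] /=; lia.
have dummy_at p :
    p \in [:: 3; 5; 6; 7] -> block_player i p = dummy (7 * i + p.-1).
  move=> p_in; rewrite /block_player; case: pickP => [c /andP[_ /eqP pos_c]|_].
    move: p_in; rewrite -pos_c; have := occ_range inst c (witness c).
    by case: (occ c (witness c)) => [|[|[|[|]]]].
  by case: eqP p_in => // ->.
have round_j j (opp : P -> P) : (forall c, opp (clause c) = clause c) ->
    (filled i j : nat) <=
    v (lit i (a i)) (opp (block_player i (2 ^ j))) j.+1.
  move=> opp_clause; rewrite /block_player expn_eq0 /=.
  case: pickP => [c seated_c|unseated].
    by rewrite opp_clause lit_beats_seated ?leq_b1.
  by case ex: (filled i j) => //; case/existsP: ex => c; rewrite unseated.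
apply: (leq_trans _ (tourn_value_mkseq8 v (lit_stronger 1 _) (lit_stronger 2 _)
                     (lit_stronger 3 _))) => //.
rewrite (dummy_at 3) ?(dummy_at 5) ?(dummy_at 6) ?(dummy_at 7) //.
have [k ->] := stronger_dummy (7 * i + 5) (7 * i + 6).
rewrite !big_ord_recr big_ord0 /= add0n; apply: leq_add; first apply: leq_add.
- exact: (round_j 0 id).
- by apply: (round_j 1 (stronger rank ^~ _)) => c; apply: stronger_clause_dummy.
- apply: (round_j 2 (fun q => stronger rank (stronger rank q _) (dummy k))).
  move=> c.
  by rewrite !stronger_clause_dummy.
Qed.

Lemma var_pairs_value : round_value v 1 var_pairs = n.
Proof.
rewrite /round_value /var_pairs pairs_flatten2 big_map big_enum /=.
rewrite (eq_bigr (fun _ => 1)) ?sum1_card ?card_ord // => i _.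
by rewrite /Tvalue /= eqxx; case: (a i).
Qed.

Lemma seed_list_value : 0 < n ->
  n + \sum_i \sum_(j < 3) (filled i j : nat) <=
  tourn_value rank v (nprime n) seed_list.
Proof.
move=> n_gt0.
rewrite /tourn_value -(subnKC (nprime_ge3 n_gt0)) tourn_value_fromD.
apply: leq_trans (leq_addr _ _).
have size_blocks : size (flatten [seq block i | i <- enum 'I_n]) = 8 * n.
  by rewrite -(size_map seed_pos) map_seed_pos_blocks size_iota.
rewrite /seed_list /seed_prefix -catA tourn_value_from_cat; last first.
  by rewrite size_blocks dvdn_mulr.
rewrite addnC; apply: leq_add.
  rewrite tourn_value_from_flatten; last first.
    by apply/allP=> b /mapP[i _ ->]; rewrite size_mkseq.
  by rewrite big_map big_enum; apply: leq_sum => i _; apply: block_value.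
rewrite /= round_value_cat ?var_pairs_value -?addnA ?leq_addr //.
rewrite -(size_map seed_pos) map_seed_pos_var_pairs size_iota.
by rewrite mul2n odd_double.
Qed.

Lemma sat_le_filled : #|[set c | clause_sat phi a c]| <=
  \sum_i \sum_(j < 3) (filled i j : nat).
Proof.
rewrite -sum1dep_card.
apply: (@leq_trans (\sum_c \sum_i \sum_(j < 3) (seated i (2 ^ j) c : nat))).
  rewrite big_mkcond; apply: leq_sum => c _; case: ifP => // sat_c.
  have lt_j : (occ c (witness c)).-1 < 3.
    by have := occ_range inst c (witness c); lia.
  apply: (leq_sum_term (phi c (witness c)).1).
  apply: (leq_sum_term (Ordinal lt_j)).
  by rewrite lt0b /seated /= (witness_sat sat_c) -surjective_pairing !eqxx.
rewrite exchange_big; apply: leq_sum => i _; rewrite exchange_big.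
apply: leq_sum => j _ /=; apply: leq_trans (sum_nat_le_existsb _) _ => //.
move=> c1 c2 /andP[/eqP phi1 /eqP pos1] /andP[/eqP phi2 /eqP pos2].
have same_x : (phi c1 (witness c1)).1 = (phi c2 (witness c2)).1.
  by rewrite phi1 phi2.
have eq_occ : occ c1 (witness c1) = occ c2 (witness c2).
  have /eqP := etrans pos1 (esym pos2); rewrite eqn_exp2l // => /eqP.
  have := occ_range inst c1 (witness c1).
  by have := occ_range inst c2 (witness c2); lia.
by case: (occ_inj inst same_x eq_occ).
Qed.
End LowerBound.

Theorem corollary1 (n m : nat) (phi : 'I_m -> 'I_2 -> 'I_n * bool)
  (occ : 'I_m -> 'I_2 -> nat) :
  max23sat_instance phi occ ->
  opt_B phi occ = opt_A phi + n.
Proof.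
move=> inst; apply/eqP; rewrite eqn_leq; apply/andP; split.
  apply/bigmax_leqP => s /injectiveP s_inj; rewrite addnC.
  by apply: (tourn_value_le_opt_A inst); rewrite map_inj_uniq ?enum_uniq.
have [n0|n_gt0] := posnP n.
  by have := opt_A_le phi; have := clauses_le inst; lia.
have dummies_ge : 7 * n <= ndummies n m.
  have := nprime_spec n; have := clauses_le inst.
  by rewrite /ndummies /padding; lia.
have dummies_gt0 : 0 < ndummies n m by lia.
pose d0 := Ordinal dummies_gt0.
have [a opt_a] : {a | opt_A phi = #|[set c | clause_sat phi a c]|}.
  by apply: eq_bigmax; apply/card_gt0P; exists [ffun=> true].
have size_seed : size (seed_list phi occ a d0) = 2 ^ nprime n.
  by rewrite size_seed_list // card_Tplayer // (clauses_le inst).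
have [s s_inj seed_s] :=
  seeding_of_uniq size_seed (seed_list_uniq phi occ a d0 dummies_ge).
apply: leq_trans _ (leq_bigmax_cond _ s_inj); rewrite seed_s opt_a addnC.
apply: leq_trans (seed_list_value inst a d0 dummies_ge n_gt0).
by rewrite leq_add2l sat_le_filled.
Qed.
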